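(* Let $W\ge 1$, $K=\lfloor (W-1)/p\rfloor$, let $\mu_c>0,l_c>0$ be such that $C$ is $\mu_c$-strongly convex and $l_c$-smooth, and $\zeta=l_c/\mu_c$. Let $\varphi$ be any initialization oracle and $\mathbf z(0)$ the vector it produces. Take stepsizes $\gamma_g=1/l_c$, $\phi=1-1/\sqrt\zeta$, $\gamma_c=(1+\phi)/l_c$, $\gamma_\omega=\phi^2/(2-\phi)$, $\gamma_y=\phi^2/((1+\phi)(2-\phi))$, $\gamma_z=\phi^2/(1-\phi^2)$. Then $$\mathrm{Regret}(\mathrm{RHGD})\le \zeta\Big(\frac{\zeta-1}{\zeta}\Big)^{K}\mathrm{Regret}(\varphi),\qquad \mathrm{Regret}(\mathrm{RHTM})\le \zeta^2\Big(\frac{\sqrt\zeta-1}{\sqrt\zeta}\Big)^{2K}\mathrm{Regret}(\varphi).$$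
   Context: Setting: $(A,B)$ in canonical form (indices $0=k_0<k_1<\dots<k_m=n$, $\mathcal I=\{k_1,\dots,k_m\}$; rows $i\notin\mathcal I$ of $A$ equal $e_{i+1}^\top$, rows in $\mathcal I$ arbitrary; $j$-th column of $B$ is $e_{k_j}$; $p_i=k_i-k_{i-1}$, controllability index $p=\max_ip_i$; $A(\mathcal I,:)$ = rows $k_1,\dots,k_m$ of $A$). Dynamics $x_{t+1}=Ax_t+Bu_t$, $x_0=0$, cost $J(\mathbf x,\mathbf u)=\sum_{t=0}^{N-1}[f_t(x_t)+g_t(u_t)]+f_N(x_N)$ with $f_t$ $\mu_f$-strongly convex and $l_f$-smooth, $g_t$ convex and $l_g$-smooth. For $\mathbf z=(z_1,\dots,z_N)\in\mathbb R^{mN}$ ($z_t=0$ for $t\le0$): $x_t(\mathbf z)=(z^1_{t-p_1+1},\dots,z^1_t,\dots,z^m_{t-p_m+1},\dots,z^m_t)^\top$, $u_t(\mathbf z)=z_{t+1}-A(\mathcal I,:)x_t(\mathbf z)$, $C(\mathbf z)=\sum_{t=0}^Nf_t(x_t(\mathbf z))+\sum_{t=0}^{N-1}g_t(u_t(\mathbf z))$; $C(\mathbf z)=J(\mathbf x(\mathbf z),\mathbf u(\mathbf z))$ and $\min C=J^*:=\min\{J(\mathbf x,\mathbf u): x_{t+1}=Ax_t+Bu_t,\ x_0=0\}$. Prediction model: at time $t$ the controller knows the current and past states and $f_s,g_s$ for $s\le t+W-1$. An initialization oracle $\varphi$ produces $\mathbf z(0)\in\mathbb R^{mN}$ with $z_{s}(0)$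 depending only on $\{f_r,g_r\}_{r\le s-1}$; $\mathrm{Regret}(\varphi):=J(\mathbf x(\mathbf z(0)),\mathbf u(\mathbf z(0)))-J^*$ (the controller $u_t=z_{t+1}(0)-A(\mathcal I,:)x_t$). For an algorithm, $\mathrm{Regret}=J(\text{its trajectory})-J^*$. RHGD (receding horizon gradient descent) is the online algorithm that, using only the $W$-step lookahead (exploiting that $\partial C/\partial z_t$ depends only on $z_{t-p},\dots,z_{t+p}$ and $f_s,g_s$ for $t-1\le s\le t+p-1$), applies $u_t=z_{t+1}(K)-A(\mathcal I,:)x_t$ where $\mathbf z(j+1)=\mathbf z(j)-\gamma_g\nabla C(\mathbf z(j))$, $j=0,\dots,K-1$, starting from the oracle's $\mathbf z(0)$; its resulting trajectory is $(\mathbf x(\mathbf z(K)),\mathbf u(\mathbf z(K)))$. RHTM (receding horizon triple momentum) is the same with the gradient step replaced by triple momentum: $\boldsymbol\omega(-1)=\boldsymbol\omega(0)=\mathbf y(0)=\mathbf z(0)$ and, for $j\ge0$, $\boldsymbol\omega(j+1)=(1+\gamma_\omega)\boldsymbol\omega(j)-\gamma_\omega\boldsymbol\omega(j-1)-\gamma_c\nabla C(\mathbf y(j))$, $\mathbf y(j+1)=(1+\gamma_y)\boldsymbol\omega(j+1)-\gamma_y\boldsymbol\omega(j)$, $\mathbf z(j+1)=(1+\gamma_z)\boldsymbol\omega(j+1)-\gamma_z\boldsymbol\omega(j)$; it applies $u_t=z_{t+1}(K)-A(\mathcal I,:)x_t$, giving trajectory $(\mathbf x(\mathbf z(K)),\mathbf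 u(\mathbf z(K)))$. *)

From Stdlib Require Import Reals Lra Lia Arith Bool.
Open Scope R_scope.

(* Vectors of R^d are modelled as functions nat -> R with 1-based
   coordinates 1..d; all other coordinates are 0 (predicate [supp]). *)

Fixpoint sum_lt (N : nat) (f : nat -> R) : R :=
  match N with O => 0 | S N' => sum_lt N' f + f N' end.

Definition fsum (d : nat) (f : nat -> R) : R := sum_lt d (fun i => f (S i)).

Definition supp (d : nat) (x : nat -> R) : Prop :=
  forall i, (i = 0%nat \/ (d < i)%nat) -> x i = 0.

Definition vadd (x y : nat -> R) : nat -> R := fun i => x i + y i.
Definition vsub (x y : nat -> R) : nat -> R := fun i => x i - y i.
Definition vscal (a : R) (x : nat -> R) : nat -> R := fun i => a * x i.

Definition dot (d : nat) (x y : nat -> R) : R := fsum d (fun i => x i * y i).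
Definition nrm2 (d : nat) (x : nat -> R) : R := dot d x x.
Definition norm (d : nat) (x : nat -> R) : R := sqrt (nrm2 d x).

Definition StronglyConvex (d : nat) (mu : R) (F : (nat -> R) -> R) : Prop :=
  forall x y th, supp d x -> supp d y -> 0 <= th <= 1 ->
    F (vadd (vscal th x) (vscal (1 - th) y))
      <= th * F x + (1 - th) * F y - mu / 2 * th * (1 - th) * nrm2 d (vsub x y).

Definition HasGrad (d : nat) (F : (nat -> R) -> R) (G : (nat -> R) -> nat -> R) : Prop :=
  forall x, supp d x ->
    supp d (G x) /\
    forall eps, 0 < eps -> exists delta, 0 < delta /\
      forall h, supp d h -> norm d h < delta ->
        Rabs (F (vadd x h) - F x - dot d (G x) h) <= eps * norm d h.

Definition SmoothWith (d : nat) (l : R) (F : (nat -> R) -> R) (G : (nat -> R) -> nat -> R) : Prop :=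
  HasGrad d F G /\
  forall x y, supp d x -> supp d y -> norm d (vsub (G x) (G y)) <= l * norm d (vsub x y).

Definition Smooth (d : nat) (l : R) (F : (nat -> R) -> R) : Prop :=
  exists G, SmoothWith d l F G.

Definition CanonIdx (n m : nat) (k : nat -> nat) : Prop :=
  (1 <= m)%nat /\ k 0%nat = 0%nat /\ k m = n /\
  forall j, (1 <= j <= m)%nat -> (k (j - 1) < k j)%nat.

Definition InI (m : nat) (k : nat -> nat) (i : nat) : Prop :=
  exists j, (1 <= j <= m)%nat /\ k j = i.

Definition CanonA (n m : nat) (k : nat -> nat) (A : nat -> nat -> R) : Prop :=
  forall i, (1 <= i <= n)%nat -> ~ InI m k i ->
    forall l, (1 <= l <= n)%nat -> A i l = (if Nat.eqb l (S i) then 1 else 0).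

Definition Bmat (k : nat -> nat) (i j : nat) : R := if Nat.eqb i (k j) then 1 else 0.

(* p_i = k_i - k_{i-1}; controllability index p = max_i p_i *)
Fixpoint pmax (k : nat -> nat) (j : nat) : nat :=
  match j with O => O | S j' => Nat.max (pmax k j') (k (S j') - k j')%nat end.

(* z in R^{mN}: z_t^j (t = 1..N, j = 1..m) is coordinate (t-1)*m + j;
   z_t = 0 for t <= 0. *)
Definition zc (N m : nat) (z : nat -> R) (t j : nat) : R :=
  if andb (1 <=? t)%nat (t <=? N)%nat then z ((t - 1) * m + j)%nat else 0.

(* x_t(z)_i = z^j_{t - k_j + i} for k_{j-1} < i <= k_j (i.e. the entries
   z^j_{t-p_j+1},...,z^j_t in block j), 0 when the time index is <= 0 *)
Definition xz (n m N : nat) (k : nat -> nat) (z : nat -> R) (t : nat) : nat -> R :=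
  fun i =>
    if andb (1 <=? i)%nat (i <=? n)%nat then
      fsum m (fun j =>
        if andb (k (j - 1) <? i)%nat (i <=? k j)%nat then
          (if (k j <? t + i)%nat then zc N m z (t + i - k j)%nat j else 0)
        else 0)
    else 0.

Definition uz (n m N : nat) (k : nat -> nat) (A : nat -> nat -> R)
  (z : nat -> R) (t : nat) : nat -> R :=
  fun j =>
    if andb (1 <=? j)%nat (j <=? m)%nat then
      zc N m z (S t) j - fsum n (fun i => A (k j) i * xz n m N k z t i)
    else 0.

Definition Jcost (N : nat) (f g : nat -> (nat -> R) -> R)
  (x u : nat -> nat -> R) : R :=
  sum_lt N (fun t => f t (x t) + g t (u t)) + f N (x N).

Definition Ccost (n m N : nat) (k : nat -> nat) (A : nat -> nat -> R)
  (f g : nat -> (nat -> R) -> R) (z : nat -> R) : R :=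
  sum_lt (S N) (fun t => f t (xz n m N k z t))
  + sum_lt N (fun t => g t (uz n m N k A z t)).

Definition Feasible (n m N : nat) (k : nat -> nat) (A : nat -> nat -> R)
  (x u : nat -> nat -> R) : Prop :=
  (forall t, (t <= N)%nat -> supp n (x t)) /\
  (forall t, (t < N)%nat -> supp m (u t)) /\
  (forall i, x 0%nat i = 0) /\
  (forall t, (t < N)%nat -> forall i, (1 <= i <= n)%nat ->
     x (S t) i = fsum n (fun l => A i l * x t l)
                 + fsum m (fun j => Bmat k i j * u t j)).

Definition IsOptVal (n m N : nat) (k : nat -> nat) (A : nat -> nat -> R)
  (f g : nat -> (nat -> R) -> R) (Jstar : R) : Prop :=
  (exists x u, Feasible n m N k A x u /\ Jcost N f g x u = Jstar) /\
  (forall x u, Feasible n m N k A x u -> Jstar <= Jcost N f g x u).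

Definition RegretZ (n m N : nat) (k : nat -> nat) (A : nat -> nat -> R)
  (f g : nat -> (nat -> R) -> R) (Jstar : R) (z : nat -> R) : R :=
  Jcost N f g (xz n m N k z) (uz n m N k A z) - Jstar.

Definition Oracle : Type :=
  (nat -> (nat -> R) -> R) -> (nat -> (nat -> R) -> R) -> (nat -> R).

Definition IsInitOracle (m N : nat) (phi : Oracle) : Prop :=
  (forall f g, supp (m * N) (phi f g)) /\
  (forall f f' g g' s, (1 <= s <= N)%nat ->
     (forall r, (r + 1 <= s)%nat -> f r = f' r /\ g r = g' r) ->
     forall j, (1 <= j <= m)%nat ->
       phi f g ((s - 1) * m + j)%nat = phi f' g' ((s - 1) * m + j)%nat).

Fixpoint gd_iter (grad : (nat -> R) -> nat -> R) (gam : R) (z0 : nat -> R)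
  (j : nat) : nat -> R :=
  match j with
  | O => z0
  | S j' => let z := gd_iter grad gam z0 j' in vsub z (vscal gam (grad z))
  end.

(* triple momentum; state (omega(j-1), omega(j), y(j)) *)
Fixpoint tm_state (grad : (nat -> R) -> nat -> R) (gc gw gy : R) (z0 : nat -> R)
  (j : nat) : (nat -> R) * (nat -> R) * (nat -> R) :=
  match j with
  | O => (z0, z0, z0)
  | S j' =>
      let '(wp, w, y) := tm_state grad gc gw gy z0 j' in
      let wn := vsub (vsub (vscal (1 + gw) w) (vscal gw wp)) (vscal gc (grad y)) in
      let yn := vsub (vscal (1 + gy) wn) (vscal gy w) in
      (w, wn, yn)
  end.

Definition tm_iter (grad : (nat -> R) -> nat -> R) (gc gw gy gz : R)
  (z0 : nat -> R) (j : nat) : nat -> R :=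
  let '(wp, w, _) := tm_state grad gc gw gy z0 j in
  vsub (vscal (1 + gz) w) (vscal gz wp).

(* Both online controllers apply the trajectory (x(z(K)), u(z(K))) where z(K) is
   obtained from the oracle output z(0) by K steps of gradient descent, resp. triple
   momentum, on the reduced cost C.

   Gradient descent with step
      1/L then contracts the optimality gap by 1 - mu/L per step.  For triple
      momentum we use the Lyapunov function
        V_j = gap(y(j), zs) + mu L |z(j+1) - zs|^2  (zs a minimizer of the cost),
      which satisfies V_{j+1} <= r^2 V_j with r = 1 - 1/sqrt(L/mu) by an exact
      algebraic identity whose remaining terms are interpolation gaps.
   2. Control.  For a system in canonical form, z |-> (x(z), u(z)) maps onto the
      feasible trajectories (with explicit inverse zstar), and J(x(z), u(z)) = C(z);
      hence min C = J^*, attained, and Regret(z) = C(z) - min C. *)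

From Stdlib Require Import Reals Lra Lia Arith Bool FunctionalExtensionality.
Open Scope R_scope.

Lemma sum_lt_ext N f g :
  (forall i, (i < N)%nat -> f i = g i) -> sum_lt N f = sum_lt N g.
Proof.
  induction N as [|N IH]; intros H; simpl; auto.
  rewrite IH by (intros; apply H; lia). rewrite H by lia. reflexivity.
Qed.

Lemma sum_lt_add N f g : sum_lt N (fun i => f i + g i) = sum_lt N f + sum_lt N g.
Proof. induction N as [|N IH]; simpl; [ring | rewrite IH; ring]. Qed.

Lemma sum_lt_nonneg N f : (forall i, (i < N)%nat -> 0 <= f i) -> 0 <= sum_lt N f.
Proof.
  induction N as [|N IH]; intros H; simpl; [lra|].
  assert (0 <= f N) by (apply H; lia).
  assert (0 <= sum_lt N f) by (apply IH; intros; apply H; lia).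
  lra.
Qed.

Lemma fsum_zero d f : (forall i, (1 <= i <= d)%nat -> f i = 0) -> fsum d f = 0.
Proof.
  unfold fsum; induction d as [|d IH]; intros H; simpl; [reflexivity|].
  rewrite IH by (intros; apply H; lia). rewrite H by lia. ring.
Qed.

Lemma fsum_single d f j : (1 <= j <= d)%nat ->
  (forall i, (1 <= i <= d)%nat -> i <> j -> f i = 0) -> fsum d f = f j.
Proof.
  unfold fsum; induction d as [|d IH]; intros Hj H; [lia|]. simpl.
  destruct (Nat.eq_dec j (S d)) as [->|Hne].
  - assert (E : fsum d f = 0) by (apply fsum_zero; intros; apply H; lia).
    unfold fsum in E; rewrite E; ring.
  - rewrite IH by (lia || (intros; apply H; lia)). rewrite (H (S d)) by lia. ring.
Qed.

Lemma fsum_nonneg_zero d f : (forall i, (1 <= i <= d)%nat -> 0 <= f i) ->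
  fsum d f = 0 -> forall i, (1 <= i <= d)%nat -> f i = 0.
Proof.
  unfold fsum; induction d as [|d IH]; intros H0 Hs i Hi; [lia|]. simpl in Hs.
  assert (0 <= sum_lt d (fun i => f (S i))) by (apply sum_lt_nonneg; intros; apply H0; lia).
  assert (0 <= f (S d)) by (apply H0; lia).
  destruct (Nat.eq_dec i (S d)) as [->|]; [lra|].
  apply IH; [intros; apply H0; lia | lra | lia].
Qed.

Lemma supp_vsub d x y : supp d x -> supp d y -> supp d (vsub x y).
Proof. unfold supp, vsub; intros Hx Hy i Hi; rewrite Hx, Hy by auto; ring. Qed.

Lemma supp_vadd d x y : supp d x -> supp d y -> supp d (vadd x y).
Proof. unfold supp, vadd; intros Hx Hy i Hi; rewrite Hx, Hy by auto; ring. Qed.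

Lemma supp_vscal d a x : supp d x -> supp d (vscal a x).
Proof. unfold supp, vscal; intros Hx i Hi; rewrite Hx by auto; ring. Qed.

Lemma supp_dim0 x : supp 0 x -> x = fun _ => 0.
Proof. intros Hx; extensionality i; apply Hx; lia. Qed.

Lemma vadd_scal0 x v : vadd x (vscal 0 v) = x.
Proof. extensionality i; unfold vadd, vscal; ring. Qed.

(* An identity between [dot]/[nrm2] of linear combinations of vectors holds
   coordinatewise, hence by induction on the number of coordinates. *)
Ltac coord_ring :=
  unfold nrm2, dot, fsum, vsub, vadd, vscal;
  let n := fresh "n" in let IH := fresh "IH" in
  match goal with |- context [sum_lt ?d _] => generalize d end;
  intro n; induction n as [|n IH]; cbn [sum_lt]; [ring | lra].

Lemma div_nonneg a b : 0 <= a -> 0 < b -> 0 <= a / b.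
Proof. intros; apply Rmult_le_pos; [lra | left; apply Rinv_0_lt_compat; lra]. Qed.

Lemma nrm2_nonneg d x : 0 <= nrm2 d x.
Proof. unfold nrm2, dot, fsum. apply sum_lt_nonneg. intros; nra. Qed.

Lemma norm_nonneg d x : 0 <= norm d x.
Proof. apply sqrt_pos. Qed.

Lemma norm_sq d x : norm d x * norm d x = nrm2 d x.
Proof. apply sqrt_sqrt, nrm2_nonneg. Qed.

Lemma norm_scal d a v : norm d (vscal a v) = Rabs a * norm d v.
Proof.
  unfold norm. replace (nrm2 d (vscal a v)) with (a * a * nrm2 d v) by coord_ring.
  rewrite sqrt_mult_alt, <- sqrt_Rsqr_abs by nra. reflexivity.
Qed.

Lemma dot_zero_l d v : dot d (fun _ => 0) v = 0.
Proof. apply fsum_zero; intros; ring. Qed.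

Lemma nrm2_eq0 d x : supp d x -> nrm2 d x = 0 -> x = fun _ => 0.
Proof.
  intros Hx H0; extensionality i.
  destruct (le_lt_dec 1 i); [destruct (le_lt_dec i d)|]; try (apply Hx; lia).
  assert (Hi := fsum_nonneg_zero d (fun i => x i * x i) ltac:(intros; nra) H0 i ltac:(lia)).
  simpl in Hi. nra.
Qed.

(* Cauchy-Schwarz, via the nonnegative quadratic t |-> |u - t v|^2. *)
Lemma cauchy_schwarz d u v : (dot d u v) ^ 2 <= nrm2 d u * nrm2 d v.
Proof.
  assert (Hq : forall t, 0 <= nrm2 d u - 2 * t * dot d u v + t ^ 2 * nrm2 d v).
  { intro t. replace (nrm2 d u - 2 * t * dot d u v + t ^ 2 * nrm2 d v)
      with (nrm2 d (vsub u (vscal t v))) by coord_ring.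
    apply nrm2_nonneg. }
  assert (HA := nrm2_nonneg d u). assert (HB := nrm2_nonneg d v).
  set (A := nrm2 d u) in *; set (B := nrm2 d v) in *; set (C := dot d u v) in *.
  destruct (Req_dec B 0) as [HB0|HB0].
  - destruct (Req_dec C 0) as [HC|HC]; [rewrite HC, HB0; nra|].
    specialize (Hq ((A + 1) / (2 * C))). rewrite HB0 in Hq.
    assert (2 * ((A + 1) / (2 * C)) * C = A + 1) by (field; auto). nra.
  - specialize (Hq (C / B)).
    replace (A - 2 * (C / B) * C + (C / B) ^ 2 * B) with ((A * B - C ^ 2) / B) in Hq
      by (field; auto).
    assert (0 <= (A * B - C ^ 2) / B * B) by (apply Rmult_le_pos; lra).
    replace ((A * B - C ^ 2) / B * B) with (A * B - C ^ 2) in * by (field; auto). lra.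
Qed.

Lemma dot_le_norm d u v : dot d u v <= norm d u * norm d v.
Proof.
  unfold norm. rewrite <- sqrt_mult_alt by apply nrm2_nonneg.
  eapply Rle_trans; [apply Rle_abs|].
  rewrite <- sqrt_Rsqr_abs. apply sqrt_le_1_alt. rewrite Rsqr_pow2. apply cauchy_schwarz.
Qed.

Lemma line_derivative d F G x v c : HasGrad d F G -> supp d x -> supp d v ->
  derivable_pt_lim (fun t => F (vadd x (vscal t v))) c (dot d (G (vadd x (vscal c v))) v).
Proof.
  intros HG Hx Hv eps Heps.
  set (y := vadd x (vscal c v)).
  assert (Hy : supp d y) by (apply supp_vadd; auto; apply supp_vscal; auto).
  destruct (HG y Hy) as [_ Hd].
  assert (Hnv := norm_nonneg d v). set (nv := norm d v) in *.
  destruct (Hd (eps / (2 * (nv + 1)))) as [del [Hdel Hh]]; [apply Rdiv_lt_0_compat; lra|].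
  assert (Hpos : 0 < del / (nv + 1)) by (apply Rdiv_lt_0_compat; lra).
  exists (mkposreal _ Hpos); simpl. intros h Hh0 Hhd.
  replace (vadd x (vscal (c + h) v)) with (vadd y (vscal h v))
    by (extensionality i; unfold y, vadd, vscal; ring).
  assert (Habs : 0 < Rabs h) by (apply Rabs_pos_lt; auto).
  assert (Hhnv : Rabs h * (nv + 1) < del).
  { apply (Rmult_lt_compat_r (nv + 1)) in Hhd; [|lra].
    replace (del / (nv + 1) * (nv + 1)) with del in Hhd by (field; lra). lra. }
  specialize (Hh (vscal h v) (supp_vscal _ _ _ Hv) ltac:(rewrite norm_scal; fold nv; nra)).
  rewrite norm_scal in Hh. fold nv in Hh.
  replace (dot d (G y) (vscal h v)) with (h * dot d (G y) v) in Hh by coord_ring.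
  set (a := F (vadd y (vscal h v)) - F y - h * dot d (G y) v) in *.
  replace ((F (vadd y (vscal h v)) - F y) / h - dot d (G y) v) with (a / h)
    by (unfold a; field; auto).
  unfold Rdiv; rewrite Rabs_mult, Rabs_inv.
  apply (Rmult_lt_reg_r (Rabs h)); auto.
  rewrite Rmult_assoc, Rinv_l by lra.
  assert (eps / (2 * (nv + 1)) * (Rabs h * nv) < eps * Rabs h).
  { replace (eps / (2 * (nv + 1)) * (Rabs h * nv)) with (eps * Rabs h * (nv / (2 * (nv + 1))))
      by (field; lra).
    assert (nv / (2 * (nv + 1)) < 1) by (apply Rmult_lt_reg_r with (2 * (nv + 1)); [lra|];
      unfold Rdiv; rewrite Rmult_assoc, Rinv_l; lra).
    assert (0 < eps * Rabs h) by nra. nra. }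
  lra.
Qed.

Lemma grad_increment_bound d F G L x v c : SmoothWith d L F G -> supp d x -> supp d v -> 0 < c ->
  dot d (vsub (G (vadd x (vscal c v))) (G x)) v <= L * c * nrm2 d v.
Proof.
  intros [_ HL] Hx Hv Hc.
  set (w := vsub (G (vadd x (vscal c v))) (G x)).
  assert (Hlip : norm d w <= L * (c * norm d v)).
  { rewrite <- (Rabs_right c), <- norm_scal by lra.
    replace (vscal c v) with (vsub (vadd x (vscal c v)) x)
      by (extensionality i; unfold vsub, vadd, vscal; ring).
    apply HL; auto. apply supp_vadd; auto. apply supp_vscal; auto. }
  assert (Hcs := dot_le_norm d w (vscal c v)).
  rewrite norm_scal, Rabs_right in Hcs by lra.
  replace (dot d w (vscal c v)) with (c * dot d w v) in Hcs by coord_ring.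
  rewrite <- norm_sq.
  assert (Hnv := norm_nonneg d v).
  assert (norm d w * (c * norm d v) <= L * (c * norm d v) * (c * norm d v))
    by (apply Rmult_le_compat_r; nra).
  apply (Rmult_le_reg_l c); nra.
Qed.

Lemma descent_lemma d F G L x y : SmoothWith d L F G -> supp d x -> supp d y ->
  F y <= F x + dot d (G x) (vsub y x) + L / 2 * nrm2 d (vsub y x).
Proof.
  intros Hsm Hx Hy.
  set (v := vsub y x). assert (Hv : supp d v) by (apply supp_vsub; auto).
  set (a := dot d (G x) v). set (b := L / 2 * nrm2 d v).
  set (psi := fun t => F (vadd x (vscal t v)) - a * t - b * (t * t)).
  assert (Hd : forall c, 0 <= c <= 1 -> derivable_pt_lim psi c
                 (dot d (G (vadd x (vscal c v))) v - a * 1 - b * (1 * c + c * 1))).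
  { intros c _.
    assert (H1 := line_derivative d F G x v c (proj1 Hsm) Hx Hv).
    assert (H2 := derivable_pt_lim_scal id a c 1 (derivable_pt_lim_id c)).
    assert (H3 := derivable_pt_lim_scal (id * id)%F b c _
      (derivable_pt_lim_mult id id c 1 1 (derivable_pt_lim_id c) (derivable_pt_lim_id c))).
    exact (derivable_pt_lim_minus _ _ _ _ _ (derivable_pt_lim_minus _ _ _ _ _ H1 H2) H3). }
  destruct (MVT_cor2 psi _ 0 1 Rlt_0_1 Hd) as [c [Hc Hc01]].
  assert (Hinc := grad_increment_bound d F G L x v c Hsm Hx Hv ltac:(lra)).
  replace (dot d (vsub (G (vadd x (vscal c v))) (G x)) v)
    with (dot d (G (vadd x (vscal c v))) v - a) in Hinc by (unfold a; coord_ring).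
  unfold psi in Hc.
  replace (vadd x (vscal 1 v)) with y in Hc
    by (extensionality i; unfold v, vadd, vsub, vscal; ring).
  rewrite vadd_scal0 in Hc.
  unfold b in *. nra.
Qed.

Lemma le0_of_le_eps A B : 0 <= B -> (forall eps, 0 < eps -> A <= eps * B) -> A <= 0.
Proof.
  intros HB H. destruct (Rle_dec A 0) as [|HA]; auto.
  specialize (H (A / (2 * (B + 1))) ltac:(apply Rdiv_lt_0_compat; lra)).
  replace (A / (2 * (B + 1)) * B) with (A * (B / (2 * (B + 1)))) in H by (field; lra).
  assert (B / (2 * (B + 1)) < 1) by (apply Rmult_lt_reg_r with (2 * (B + 1)); [lra|];
    unfold Rdiv; rewrite Rmult_assoc, Rinv_l; lra).
  nra.
Qed.

(* First-order characterization of strong convexity: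
   F y >= F x + <G x, y - x> + mu/2 |y - x|^2, obtained by letting the
   interpolation parameter of the definition tend to 0. *)
Lemma strong_convexity_first_order d F G mu x y :
  StronglyConvex d mu F -> HasGrad d F G -> 0 <= mu -> supp d x -> supp d y ->
  F x + dot d (G x) (vsub y x) + mu / 2 * nrm2 d (vsub y x) <= F y.
Proof.
  intros Hsc HG Hmu Hx Hy.
  set (v := vsub y x). assert (Hv : supp d v) by (apply supp_vsub; auto).
  set (N := nrm2 d v). assert (HN : 0 <= N) by apply nrm2_nonneg.
  set (D := dot d (G x) v).
  assert (Hchord : forall th, 0 < th <= 1 ->
    F (vadd x (vscal th v)) - F x <= th * (F y - F x - mu / 2 * (1 - th) * N)).
  { intros th Hth. assert (Hs := Hsc y x th Hy Hx ltac:(lra)).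
    replace (vadd (vscal th y) (vscal (1 - th) x)) with (vadd x (vscal th v)) in Hs
      by (extensionality i; unfold v, vadd, vsub, vscal; ring).
    fold v N in Hs. nra. }
  enough (D + mu / 2 * N - (F y - F x) <= 0) by (unfold D, N in *; lra).
  apply (le0_of_le_eps _ (1 + mu / 2 * N)); [nra|]. intros eps Heps.
  assert (Hder := line_derivative d F G x v 0 HG Hx Hv).
  rewrite vadd_scal0 in Hder.
  destruct (Hder eps Heps) as [del Hdel].
  set (th := Rmin (del / 2) (Rmin eps 1)).
  assert (Hdp := cond_pos del).
  assert (Hth0 : 0 < th) by (unfold th; repeat apply Rmin_pos; lra).
  assert (Hthd : th < del) by (unfold th; eapply Rle_lt_trans; [apply Rmin_l | lra]).
  assert (Hthe : th <= eps) by (unfold th; eapply Rle_trans; [apply Rmin_r | apply Rmin_l]).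
  assert (Hth1 : th <= 1) by (unfold th; eapply Rle_trans; [apply Rmin_r | apply Rmin_r]).
  specialize (Hdel th ltac:(apply Rgt_not_eq; lra) ltac:(rewrite Rabs_right; lra)).
  cbv beta in Hdel. rewrite Rplus_0_l, vadd_scal0 in Hdel. fold D in Hdel.
  assert (Hslope : D - eps < (F (vadd x (vscal th v)) - F x) / th)
    by (apply Rabs_def2 in Hdel; lra).
  assert (Hc := Hchord th ltac:(lra)).
  assert ((F (vadd x (vscal th v)) - F x) / th <= F y - F x - mu / 2 * (1 - th) * N).
  { apply (Rmult_le_reg_l th); [lra|].
    replace (th * ((F (vadd x (vscal th v)) - F x) / th)) with (F (vadd x (vscal th v)) - F x)
      by (field; lra). lra. }
  assert (mu / 2 * th * N <= mu / 2 * eps * N) by (apply Rmult_le_compat_r; nra).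
  nra.
Qed.

(* The interpolation gap of a mu-strongly convex, L-smooth function between
   points a and b (Taylor, Hendrickx and Glineur); it is nonnegative. *)
Definition interp_gap d (F : (nat -> R) -> R) (G : (nat -> R) -> nat -> R) (mu L : R)
  (a b : nat -> R) : R :=
  (L - mu) * (F a - F b - dot d (G b) (vsub a b) - mu / 2 * nrm2 d (vsub a b))
  - 1 / 2 * nrm2 d (vsub (vsub (G a) (G b)) (vscal mu (vsub a b))).

(* Combine the strong convexity lower bound at b with the descent upper bound at a,
   both evaluated at a - t v for v = (G a - G b) - mu (a - b), and optimize in t. *)
Lemma interp_gap_nonneg d F G mu L a b : StronglyConvex d mu F -> SmoothWith d L F G ->
  0 <= mu <= L -> supp d a -> supp d b -> 0 <= interp_gap d F G mu L a b.
Proof.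
  intros Hsc Hsm Hmu Ha Hb. unfold interp_gap.
  assert (HG := proj1 Hsm).
  set (v := vsub (vsub (G a) (G b)) (vscal mu (vsub a b))).
  assert (Hv : supp d v).
  { repeat (apply supp_vsub || apply supp_vscal); auto; [apply (HG a Ha) | apply (HG b Hb)]. }
  assert (HN := nrm2_nonneg d v). set (N := nrm2 d v) in *.
  set (Dv := F a - F b - dot d (G b) (vsub a b) - mu / 2 * nrm2 d (vsub a b)).
  assert (Ht : forall t, t * N - (L - mu) / 2 * (t * t) * N <= Dv).
  { intro t. set (y := vsub a (vscal t v)).
    assert (Hy : supp d y) by (apply supp_vsub; auto; apply supp_vscal; auto).
    assert (H1 := strong_convexity_first_order d F G mu b y Hsc HG ltac:(lra) Hb Hy).
    assert (H2 := descent_lemma d F G L a y Hsm Ha Hy).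
    assert (E : dot d (G a) (vsub y a) + L / 2 * nrm2 d (vsub y a)
                - dot d (G b) (vsub y b) - mu / 2 * nrm2 d (vsub y b)
              = - dot d (G b) (vsub a b) - mu / 2 * nrm2 d (vsub a b)
                - t * N + (L - mu) / 2 * (t * t) * N)
      by (unfold y, N, v; coord_ring).
    unfold Dv. lra. }
  destruct (Req_dec (L - mu) 0) as [HL|HL].
  - (* mu = L: the quadratic in t is linear, so N = 0 *)
    destruct (Req_dec N 0) as [HN0|HN0]; [rewrite HL, HN0; lra|].
    specialize (Ht ((Rabs Dv + 1) / N)). rewrite HL in Ht.
    replace ((Rabs Dv + 1) / N * N) with (Rabs Dv + 1) in Ht by (field; auto).
    assert (Dv <= Rabs Dv) by apply Rle_abs. lra.
  - specialize (Ht (1 / (L - mu))).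
    replace (1 / (L - mu) * N - (L - mu) / 2 * (1 / (L - mu) * (1 / (L - mu))) * N)
      with (N / (2 * (L - mu))) in Ht by (field; auto).
    apply (Rmult_le_compat_l (L - mu)) in Ht; [|lra].
    replace ((L - mu) * (N / (2 * (L - mu)))) with (N / 2) in Ht by (field; auto).
    fold Dv. lra.
Qed.

Lemma gradient_step_decrease d F G L z : SmoothWith d L F G -> 0 < L -> supp d z ->
  F (vsub z (vscal (1 / L) (G z))) <= F z - 1 / (2 * L) * nrm2 d (G z).
Proof.
  intros Hsm HL Hz.
  assert (Hy : supp d (vsub z (vscal (1 / L) (G z)))).
  { apply supp_vsub; auto; apply supp_vscal, (proj1 Hsm z Hz). }
  assert (H := descent_lemma d F G L z _ Hsm Hz Hy).
  assert (E : dot d (G z) (vsub (vsub z (vscal (1 / L) (G z))) z)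
               + L / 2 * nrm2 d (vsub (vsub z (vscal (1 / L) (G z))) z)
             = (- (1 / L) + L / 2 * (1 / L) * (1 / L)) * nrm2 d (G z)) by coord_ring.
  replace (- (1 / L) + L / 2 * (1 / L) * (1 / L)) with (- (1 / (2 * L))) in E by (field; lra).
  lra.
Qed.

Lemma grad_at_minimizer d F G L zs : SmoothWith d L F G -> 0 < L -> supp d zs ->
  (forall z, supp d z -> F zs <= F z) -> G zs = fun _ => 0.
Proof.
  intros Hsm HL Hzs Hmin.
  assert (Hstep := gradient_step_decrease d F G L zs Hsm HL Hzs).
  assert (Hy : supp d (vsub zs (vscal (1 / L) (G zs)))).
  { apply supp_vsub; auto; apply supp_vscal, (proj1 Hsm zs Hzs). }
  assert (Hmin' := Hmin _ Hy).
  assert (HN := nrm2_nonneg d (G zs)).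
  assert (0 < 1 / (2 * L)) by (apply Rdiv_lt_0_compat; lra).
  apply (nrm2_eq0 d); [apply (proj1 Hsm zs Hzs) | nra].
Qed.

(* In positive dimension the strong convexity modulus is at most the smoothness
   constant (compare both bounds along a unit vector). *)
Lemma strong_convexity_le_smoothness d F G mu L : (1 <= d)%nat ->
  StronglyConvex d mu F -> SmoothWith d L F G -> 0 <= mu -> mu <= L.
Proof.
  intros Hd Hsc Hsm Hmu.
  set (o := fun _ : nat => 0).
  set (e1 := fun i : nat => if Nat.eqb i 1 then 1 else 0).
  assert (Ho : supp d o) by (intros i _; reflexivity).
  assert (He1 : supp d e1) by (intros i Hi; unfold e1; destruct (Nat.eqb_spec i 1); lia || lra).
  assert (Hn1 : nrm2 d (vsub e1 o) = 1).
  { unfold nrm2, dot. rewrite (fsum_single d _ 1 ltac:(lia)).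
    - unfold vsub, e1, o; simpl; ring.
    - intros i Hi Hne. unfold vsub, e1, o. destruct (Nat.eqb_spec i 1); [lia | ring]. }
  assert (H1 := strong_convexity_first_order d F G mu o e1 Hsc (proj1 Hsm) Hmu Ho He1).
  assert (H2 := descent_lemma d F G L o e1 Hsm Ho He1).
  rewrite Hn1 in H1, H2. lra.
Qed.

Lemma polyak_lojasiewicz d F G mu z zs : StronglyConvex d mu F -> HasGrad d F G ->
  0 < mu -> supp d z -> supp d zs -> F z - F zs <= 1 / (2 * mu) * nrm2 d (G z).
Proof.
  intros Hsc HG Hmu Hz Hzs.
  assert (H := strong_convexity_first_order d F G mu z zs Hsc HG ltac:(lra) Hz Hzs).
  assert (E : nrm2 d (vadd (vscal mu (vsub zs z)) (G z))
              = 2 * mu * (dot d (G z) (vsub zs z) + mu / 2 * nrm2 d (vsub zs z)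
                          + 1 / (2 * mu) * nrm2 d (G z))).
  { replace (2 * mu * (dot d (G z) (vsub zs z) + mu / 2 * nrm2 d (vsub zs z)
                       + 1 / (2 * mu) * nrm2 d (G z)))
      with (2 * mu * dot d (G z) (vsub zs z) + mu * mu * nrm2 d (vsub zs z) + nrm2 d (G z))
      by (field; lra).
    coord_ring. }
  assert (Hn := nrm2_nonneg d (vadd (vscal mu (vsub zs z)) (G z))).
  rewrite E in Hn.
  assert (0 <= dot d (G z) (vsub zs z) + mu / 2 * nrm2 d (vsub zs z)
               + 1 / (2 * mu) * nrm2 d (G z)) by nra.
  lra.
Qed.

Lemma gd_step_contraction d F G mu L z zs : StronglyConvex d mu F -> SmoothWith d L F G ->
  0 < mu -> 0 < L -> supp d z -> supp d zs ->
  F (vsub z (vscal (1 / L) (G z))) - F zs <= (1 - mu / L) * (F z - F zs).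
Proof.
  intros Hsc Hsm Hmu HL Hz Hzs.
  assert (Hdec := gradient_step_decrease d F G L z Hsm HL Hz).
  assert (Hpl := polyak_lojasiewicz d F G mu z zs Hsc (proj1 Hsm) Hmu Hz Hzs).
  assert (Hr : 0 <= mu / L) by (apply div_nonneg; lra).
  apply (Rmult_le_compat_l (mu / L)) in Hpl; auto.
  replace (mu / L * (1 / (2 * mu) * nrm2 d (G z))) with (1 / (2 * L) * nrm2 d (G z))
    in Hpl by (field; lra).
  lra.
Qed.

Lemma gd_iter_supp d G gam z0 : (forall x, supp d x -> supp d (G x)) -> supp d z0 ->
  forall K, supp d (gd_iter G gam z0 K).
Proof.
  intros HG Hz0 K; induction K; simpl; auto.
  apply supp_vsub; auto. apply supp_vscal; auto.
Qed.

Lemma gd_rate d F G mu L z0 zs : StronglyConvex d mu F -> SmoothWith d L F G ->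
  0 < mu <= L -> supp d z0 -> supp d zs ->
  forall K, F (gd_iter G (1 / L) z0 K) - F zs <= (1 - mu / L) ^ K * (F z0 - F zs).
Proof.
  intros Hsc Hsm Hmu Hz0 Hzs K.
  assert (HG : forall x, supp d x -> supp d (G x)) by (intros x Hx; apply (proj1 Hsm x Hx)).
  assert (Hrho : 0 <= 1 - mu / L).
  { assert (mu / L <= 1) by (apply Rmult_le_reg_r with L; [lra|];
      unfold Rdiv; rewrite Rmult_assoc, Rinv_l; lra). lra. }
  induction K as [|K IH]; simpl; [lra|].
  assert (Hs := gd_step_contraction d F G mu L (gd_iter G (1 / L) z0 K) zs Hsc Hsm
                  ltac:(lra) ltac:(lra) (gd_iter_supp d G _ z0 HG Hz0 K) Hzs).
  apply (Rmult_le_compat_l (1 - mu / L)) in IH; auto. lra.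
Qed.

Section TripleMomentumIterates.
Variables (G : (nat -> R) -> nat -> R) (gc gw gy gz : R) (z0 : nat -> R).

Definition tmP (j : nat) : nat -> R := fst (fst (tm_state G gc gw gy z0 j)).
Definition tmW (j : nat) : nat -> R := snd (fst (tm_state G gc gw gy z0 j)).
Definition tmY (j : nat) : nat -> R := snd (tm_state G gc gw gy z0 j).

Lemma tmP_S j : tmP (S j) = tmW j.
Proof. unfold tmP, tmW; simpl. destruct (tm_state G gc gw gy z0 j) as [[a b] c]; reflexivity. Qed.

Lemma tmW_S j :
  tmW (S j) = vsub (vsub (vscal (1 + gw) (tmW j)) (vscal gw (tmP j))) (vscal gc (G (tmY j))).
Proof. unfold tmP, tmW, tmY; simpl. destruct (tm_state G gc gw gy z0 j) as [[a b] c]; reflexivity. Qed.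

Lemma tmY_S j : tmY (S j) = vsub (vscal (1 + gy) (tmW (S j))) (vscal gy (tmW j)).
Proof. unfold tmP, tmW, tmY; simpl. destruct (tm_state G gc gw gy z0 j) as [[a b] c]; reflexivity. Qed.

Lemma tmY_eq j : tmY j = vsub (vscal (1 + gy) (tmW j)) (vscal gy (tmP j)).
Proof.
  destruct j as [|j]; [|rewrite tmY_S, tmP_S; reflexivity].
  extensionality i; unfold tmY, tmW, tmP, vsub, vscal; simpl; ring.
Qed.

Lemma tm_iter_eq j : tm_iter G gc gw gy gz z0 j = vsub (vscal (1 + gz) (tmW j)) (vscal gz (tmP j)).
Proof. unfold tm_iter, tmP, tmW. destruct (tm_state G gc gw gy z0 j) as [[a b] c]; reflexivity. Qed.

Lemma tm_iter_0 : tm_iter G gc gw gy gz z0 0 = z0.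
Proof. rewrite tm_iter_eq; extensionality i; unfold tmW, tmP, vsub, vscal; simpl; ring. Qed.

Lemma tm_supp d : (forall x, supp d x -> supp d (G x)) -> supp d z0 ->
  forall j, supp d (tmP j) /\ supp d (tmW j) /\ supp d (tmY j).
Proof.
  intros HG Hz j. induction j as [|j (H1 & H2 & H3)]; [unfold tmP, tmW, tmY; simpl; auto|].
  rewrite tmP_S, tmY_S, tmW_S.
  assert (supp d (vsub (vsub (vscal (1 + gw) (tmW j)) (vscal gw (tmP j))) (vscal gc (G (tmY j)))))
    by (repeat (apply supp_vsub || apply supp_vscal); auto).
  repeat split; auto. repeat (apply supp_vsub || apply supp_vscal); auto.
Qed.

Lemma tm_iter_supp d : (forall x, supp d x -> supp d (G x)) -> supp d z0 ->
  forall j, supp d (tm_iter G gc gw gy gz z0 j).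
Proof.
  intros HG Hz j. rewrite tm_iter_eq. destruct (tm_supp d HG Hz j) as (H1 & H2 & _).
  apply supp_vsub; apply supp_vscal; auto.
Qed.

End TripleMomentumIterates.

(** Linear convergence of triple momentum, through a Lyapunov function. *)

Section TripleMomentumRate.
Variables (mu L s r gc gw gy gz : R).
(* The step sizes of the theorem, written with s = sqrt (L / mu) and r = 1 - 1/s. *)
Hypothesis Hmu : 0 < mu.
Hypothesis Hs : 1 <= s.
Hypothesis HL : L = mu * s ^ 2.
Hypothesis Hr : r = 1 - 1 / s.
Hypothesis Hgc : gc = (1 + r) / L.
Hypothesis Hgw : gw = r ^ 2 / (2 - r).
Hypothesis Hgy : gy = r ^ 2 / ((1 + r) * (2 - r)).
Hypothesis Hgz : gz = r ^ 2 / (1 - r ^ 2).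

(* One coordinate of [interp_gap] without the function values, which cancel in
   the identities below. *)
Definition gap_coord (a b ga gb : R) : R :=
  (L - mu) * (- (gb * (a - b)) - mu / 2 * ((a - b) * (a - b)))
  - 1 / 2 * ((ga - gb - mu * (a - b)) * (ga - gb - mu * (a - b))).

(* Coordinatewise form of the Lyapunov identity for one momentum step; xs is a
   coordinate of the minimizer, where the gradient vanishes. *)
Lemma step_identity_coord p w xs g1 g2 :
  let y := (1 + gy) * w - gy * p in
  let wn := (1 + gw) * w - gw * p - gc * g1 in
  let yn := (1 + gy) * wn - gy * w in
  let wnn := (1 + gw) * wn - gw * w - gc * g2 in
  let xk := (1 + gz) * wn - gz * w in
  let xk1 := (1 + gz) * wnn - gz * wn in
  gap_coord yn xs g2 0 + mu * L * ((xk1 - xs) * (xk1 - xs))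
  - r ^ 2 * (gap_coord y xs g1 0 + mu * L * ((xk - xs) * (xk - xs)))
  + (1 - r ^ 2) * gap_coord xs yn 0 g2 + r ^ 2 * gap_coord y yn g1 g2 = 0.
Proof.
  intros y wn yn wnn xk xk1. unfold xk1, xk, wnn, yn, wn, y, gap_coord.
  subst gc gw gy gz r L. field. repeat split; intro; lra.
Qed.

Lemma initial_identity_coord z xs g0 :
  let w1 := (1 + gw) * z - gw * z - gc * g0 in
  let x1 := (1 + gz) * w1 - gz * z in
  mu ^ 2 * s ^ 2 * (s - 1) ^ 2 * ((z - xs) * (z - xs))
  - (gap_coord z xs g0 0 + mu * L * ((x1 - xs) * (x1 - xs)))
  - 2 * s / (s + 1) * gap_coord xs z 0 g0 - (s - 1) / (s + 1) * gap_coord z xs g0 0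
  = (s - 1) / (s + 1) * ((L * (z - xs) - g0) * (L * (z - xs) - g0)).
Proof.
  intros w1 x1. unfold x1, w1, gap_coord.
  subst gc gw gz r L. field. repeat split; intro; lra.
Qed.

Variables (d : nat) (F : (nat -> R) -> R) (G : (nat -> R) -> nat -> R) (z0 zs : nat -> R).
Hypothesis Hsc : StronglyConvex d mu F.
Hypothesis Hsm : SmoothWith d L F G.
Hypothesis Hz0 : supp d z0.
Hypothesis Hzs : supp d zs.
Hypothesis Hmin : forall z, supp d z -> F zs <= F z.

Lemma mu_le_L : mu <= L.
Proof. rewrite HL; assert (1 <= s ^ 2) by (simpl; nra); nra. Qed.

Lemma L_pos : 0 < L.
Proof. pose proof mu_le_L; lra. Qed.

Lemma grad_zs : G zs = fun _ => 0.
Proof. exact (grad_at_minimizer d F G L zs Hsm L_pos Hzs Hmin). Qed.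

Lemma gap_nonneg a b : supp d a -> supp d b -> 0 <= interp_gap d F G mu L a b.
Proof. intros; apply interp_gap_nonneg; auto; pose proof mu_le_L; lra. Qed.

Lemma step_identity p w Y0 Y1 :
  Y0 = vsub (vscal (1 + gy) w) (vscal gy p) ->
  Y1 = vsub (vscal (1 + gy) (vsub (vsub (vscal (1 + gw) w) (vscal gw p)) (vscal gc (G Y0))))
            (vscal gy w) ->
  let wn := vsub (vsub (vscal (1 + gw) w) (vscal gw p)) (vscal gc (G Y0)) in
  let wnn := vsub (vsub (vscal (1 + gw) wn) (vscal gw w)) (vscal gc (G Y1)) in
  let X1 := vsub (vscal (1 + gz) wn) (vscal gz w) in
  let X2 := vsub (vscal (1 + gz) wnn) (vscal gz wn) in
  interp_gap d F G mu L Y1 zs + mu * L * nrm2 d (vsub X2 zs)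
  - r ^ 2 * (interp_gap d F G mu L Y0 zs + mu * L * nrm2 d (vsub X1 zs))
  + (1 - r ^ 2) * interp_gap d F G mu L zs Y1 + r ^ 2 * interp_gap d F G mu L Y0 Y1 = 0.
Proof.
  intros HY0 HY1 wn wnn X1 X2. unfold X2, X1, wnn, wn, interp_gap. rewrite grad_zs.
  set (g1 := G Y0) in *. set (g2 := G Y1). set (f0 := F Y0). set (f1 := F Y1). set (fs := F zs).
  clearbody g1 g2 f0 f1 fs. subst Y0 Y1.
  unfold nrm2, dot, fsum, vsub, vadd, vscal.
  generalize d; intro n; induction n as [|n IH]; cbn [sum_lt]; [ring|].
  assert (Hp := step_identity_coord (p (S n)) (w (S n)) (zs (S n)) (g1 (S n)) (g2 (S n))).
  cbv zeta in Hp. unfold gap_coord in Hp. lra.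
Qed.

(* The initial Lyapunov value differs from mu^2 s^2 (s-1)^2 |z0 - zs|^2 by
   nonnegative terms. *)
Lemma initial_identity :
  let w1 := vsub (vsub (vscal (1 + gw) z0) (vscal gw z0)) (vscal gc (G z0)) in
  let x1 := vsub (vscal (1 + gz) w1) (vscal gz z0) in
  mu ^ 2 * s ^ 2 * (s - 1) ^ 2 * nrm2 d (vsub z0 zs)
  - (interp_gap d F G mu L z0 zs + mu * L * nrm2 d (vsub x1 zs))
  - 2 * s / (s + 1) * interp_gap d F G mu L zs z0
  - (s - 1) / (s + 1) * interp_gap d F G mu L z0 zs
  = (s - 1) / (s + 1) * nrm2 d (vsub (vscal L (vsub z0 zs)) (G z0)).
Proof.
  intros w1 x1. unfold x1, w1, interp_gap. rewrite grad_zs.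
  set (g0 := G z0). set (f0 := F z0). set (fs := F zs). clearbody g0 f0 fs.
  unfold nrm2, dot, fsum, vsub, vadd, vscal.
  generalize d; intro n; induction n as [|n IH]; cbn [sum_lt]; [field; lra|].
  assert (Hp := initial_identity_coord (z0 (S n)) (zs (S n)) (g0 (S n))).
  cbv zeta in Hp. unfold gap_coord in Hp. lra.
Qed.

Lemma r_range : 0 <= r < 1.
Proof.
  rewrite Hr. assert (0 < 1 / s) by (apply Rdiv_lt_0_compat; lra).
  assert (1 / s <= 1) by (apply Rmult_le_reg_r with s; [lra|];
    unfold Rdiv; rewrite Rmult_assoc, Rinv_l; lra).
  lra.
Qed.

Lemma grad_supp : forall x, supp d x -> supp d (G x).
Proof. intros x Hx; apply (proj1 Hsm x Hx). Qed.

Definition tm_lyap (j : nat) : R :=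
  interp_gap d F G mu L (tmY G gc gw gy z0 j) zs
  + mu * L * nrm2 d (vsub (tm_iter G gc gw gy gz z0 (S j)) zs).

Lemma tm_lyap_decrease j : tm_lyap (S j) <= r ^ 2 * tm_lyap j.
Proof.
  destruct (tm_supp G gc gw gy z0 d grad_supp Hz0 j) as (_ & _ & Hy0).
  destruct (tm_supp G gc gw gy z0 d grad_supp Hz0 (S j)) as (_ & _ & Hy1).
  assert (Hid := step_identity (tmP G gc gw gy z0 j) (tmW G gc gw gy z0 j)
    (tmY G gc gw gy z0 j) (tmY G gc gw gy z0 (S j)) (tmY_eq _ _ _ _ _ j)
    ltac:(rewrite tmY_S, tmW_S; reflexivity)).
  cbv zeta in Hid. unfold tm_lyap.
  rewrite (tm_iter_eq _ _ _ _ _ _ (S (S j))), (tm_iter_eq _ _ _ _ _ _ (S j)).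
  rewrite !tmP_S, (tmW_S _ _ _ _ _ (S j)), tmP_S, tmW_S.
  assert (I1 := gap_nonneg _ _ Hzs Hy1). assert (I2 := gap_nonneg _ _ Hy0 Hy1).
  pose proof r_range.
  assert (0 <= (1 - r ^ 2) * interp_gap d F G mu L zs (tmY G gc gw gy z0 (S j)))
    by (apply Rmult_le_pos; nra).
  assert (0 <= r ^ 2 * interp_gap d F G mu L (tmY G gc gw gy z0 j) (tmY G gc gw gy z0 (S j)))
    by (apply Rmult_le_pos; nra).
  lra.
Qed.

Lemma tm_lyap_iter j : tm_lyap j <= r ^ (2 * j) * tm_lyap 0.
Proof.
  rewrite pow_mult. induction j as [|j IH]; simpl; [lra|].
  assert (H := tm_lyap_decrease j). pose proof r_range.
  apply (Rmult_le_compat_l (r ^ 2)) in IH; [|nra]. simpl in IH. lra.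
Qed.

Lemma tm_lyap_initial : tm_lyap 0 <= mu ^ 2 * s ^ 2 * (s - 1) ^ 2 * nrm2 d (vsub z0 zs).
Proof.
  assert (Hid := initial_identity). cbv zeta in Hid.
  unfold tm_lyap. rewrite tm_iter_eq, tmW_S, tmP_S.
  change (tmY G gc gw gy z0 0) with z0. change (tmW G gc gw gy z0 0) with z0.
  change (tmP G gc gw gy z0 0) with z0.
  assert (I1 := gap_nonneg _ _ Hzs Hz0). assert (I2 := gap_nonneg _ _ Hz0 Hzs).
  assert (Hq := nrm2_nonneg d (vsub (vscal L (vsub z0 zs)) (G z0))).
  assert (0 <= 2 * s / (s + 1)) by (apply div_nonneg; lra).
  assert (0 <= (s - 1) / (s + 1)) by (apply div_nonneg; lra).
  assert (0 <= 2 * s / (s + 1) * interp_gap d F G mu L zs z0) by (apply Rmult_le_pos; lra).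
  assert (0 <= (s - 1) / (s + 1) * interp_gap d F G mu L z0 zs) by (apply Rmult_le_pos; lra).
  assert (0 <= (s - 1) / (s + 1) * nrm2 d (vsub (vscal L (vsub z0 zs)) (G z0)))
    by (apply Rmult_le_pos; lra).
  lra.
Qed.

Lemma tm_rate K :
  F (tm_iter G gc gw gy gz z0 K) - F zs <= s ^ 4 * r ^ (2 * K) * (F z0 - F zs).
Proof.
  assert (Hgap0 : 0 <= F z0 - F zs) by (pose proof (Hmin z0 Hz0); lra).
  pose proof r_range.
  destruct K as [|j].
  - rewrite tm_iter_0. assert (1 <= s ^ 4) by (assert (1 <= s ^ 2) by (simpl; nra); simpl in *; nra).
    simpl. nra.
  - set (x := tm_iter G gc gw gy gz z0 (S j)).
    assert (Hx : supp d x) by apply (tm_iter_supp G gc gw gy gz z0 d grad_supp Hz0).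
    (* F x - F zs <= L/2 |x - zs|^2 <= tm_lyap j / (2 mu) *)
    assert (Hup := descent_lemma d F G L zs x Hsm Hzs Hx).
    rewrite grad_zs, dot_zero_l in Hup.
    assert (Hlyap : mu * L * nrm2 d (vsub x zs) <= tm_lyap j).
    { unfold tm_lyap. destruct (tm_supp G gc gw gy z0 d grad_supp Hz0 j) as (_ & _ & Hy).
      assert (Hg := gap_nonneg _ _ Hy Hzs). fold x. lra. }
    assert (Hlow := strong_convexity_first_order d F G mu zs z0 Hsc (proj1 Hsm) ltac:(lra) Hzs Hz0).
    rewrite grad_zs, dot_zero_l in Hlow.
    assert (Hit := tm_lyap_iter j). assert (Hinit := tm_lyap_initial).
    assert (Hrj : 0 <= r ^ (2 * j)) by (apply pow_le; lra).
    set (c := r ^ (2 * j) * (s ^ 2 * (s - 1) ^ 2)).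
    assert (Hc : 0 <= c) by (unfold c; apply Rmult_le_pos; [lra | apply Rmult_le_pos; apply pow2_ge_0]).
    assert (Hmu_gap : mu * (F x - F zs) <= mu * (c * (F z0 - F zs))).
    { apply (Rmult_le_compat_l (r ^ (2 * j))) in Hinit; [|lra].
      assert (mu * (c * (mu / 2 * nrm2 d (vsub z0 zs))) <= mu * (c * (F z0 - F zs)))
        by (apply Rmult_le_compat_l; [lra | apply Rmult_le_compat_l; lra]).
      replace (mu * (c * (mu / 2 * nrm2 d (vsub z0 zs))))
        with (r ^ (2 * j) * (mu ^ 2 * s ^ 2 * (s - 1) ^ 2 * nrm2 d (vsub z0 zs)) / 2) in *
        by (unfold c; field).
      nra. }
    apply (Rmult_le_reg_l mu) in Hmu_gap; [|lra].
    replace (s ^ 4 * r ^ (2 * S j)) with (r ^ (2 * j) * (s ^ 2 * (r * s) ^ 2))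
      by (replace (2 * S j)%nat with (2 * j + 2)%nat by lia; rewrite pow_add; ring).
    replace (r * s) with (s - 1) by (rewrite Hr; field; lra).
    exact Hmu_gap.
Qed.

End TripleMomentumRate.

(** The change of variables z -> (x(z), u(z)) for a system in canonical form. *)

Section CanonicalForm.
Variables (n m : nat) (k : nat -> nat).
Hypothesis Hk : CanonIdx n m k.

Lemma k_strict_mono a b : (a < b <= m)%nat -> (k a < k b)%nat.
Proof.
  destruct Hk as (_ & _ & _ & Hstep). induction b as [|b IH]; intros Hab; [lia|].
  assert (H := Hstep (S b) ltac:(lia)). replace (S b - 1)%nat with b in H by lia.
  destruct (Nat.eq_dec a b) as [->|]; auto. assert (k a < k b)%nat by (apply IH; lia). lia.
Qed.

Lemma k_mono a b : (a <= b <= m)%nat -> (k a <= k b)%nat.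
Proof.
  intros H. destruct (Nat.eq_dec a b) as [->|]; [lia|].
  assert (k a < k b)%nat by (apply k_strict_mono; lia). lia.
Qed.

Lemma k_range j : (1 <= j <= m)%nat -> (1 <= k j <= n)%nat.
Proof.
  intros Hj. destruct Hk as (_ & Hk0 & Hkm & _).
  assert (k 0 < k j)%nat by (apply k_strict_mono; lia).
  assert (k j <= k m)%nat by (apply k_mono; lia). lia.
Qed.

Lemma block_exists i : (1 <= i <= n)%nat ->
  exists j, (1 <= j <= m)%nat /\ (k (j - 1) < i <= k j)%nat.
Proof.
  intros Hi. destruct Hk as (Hm & Hk0 & Hkm & _).
  assert (H : forall j, (i <= k j)%nat -> exists j', (1 <= j' <= j)%nat /\ (k (j' - 1) < i <= k j')%nat).
  { induction j as [|j IH]; intros Hij; [lia|].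
    destruct (le_lt_dec i (k j)) as [Hle|Hlt].
    - destruct (IH Hle) as (j' & H1 & H2). exists j'; split; [lia | auto].
    - exists (S j); split; [lia|]. replace (S j - 1)%nat with j by lia. lia. }
  destruct (H m ltac:(lia)) as (j & H1 & H2). exists j; split; auto.
Qed.

Lemma block_unique i j j' : (1 <= j <= m)%nat -> (1 <= j' <= m)%nat ->
  (k (j - 1) < i <= k j)%nat -> (k (j' - 1) < i <= k j')%nat -> j = j'.
Proof.
  intros Hj Hj' H1 H2. destruct (lt_eq_lt_dec j j') as [[Hlt|]|Hlt]; auto.
  - assert (k j <= k (j' - 1))%nat by (apply k_mono; lia). lia.
  - assert (k j' <= k (j - 1))%nat by (apply k_mono; lia). lia.
Qed.

Lemma xz_block N z t i j0 : (1 <= i <= n)%nat -> (1 <= j0 <= m)%nat ->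
  (k (j0 - 1) < i <= k j0)%nat ->
  xz n m N k z t i = if (k j0 <? t + i)%nat then zc N m z (t + i - k j0)%nat j0 else 0.
Proof.
  intros Hi Hj0 Hb. unfold xz.
  destruct (Nat.leb_spec0 1 i); destruct (Nat.leb_spec0 i n); try lia. simpl.
  rewrite (fsum_single m _ j0 Hj0).
  - destruct (Nat.ltb_spec0 (k (j0 - 1)%nat) i); destruct (Nat.leb_spec0 i (k j0));
      simpl; auto; lia.
  - intros j Hj Hne. destruct (Nat.ltb_spec0 (k (j - 1)%nat) i);
      destruct (Nat.leb_spec0 i (k j)); simpl; auto.
    exfalso. apply Hne. apply (block_unique i); auto; lia.
Qed.

Lemma not_InI_inside_block i j0 : (1 <= j0 <= m)%nat -> (k (j0 - 1) < i < k j0)%nat ->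
  ~ InI m k i.
Proof.
  intros Hj0 Hb [j [Hj Hkj]].
  assert (j = j0).
  { apply (block_unique i); auto; [|lia].
    split; [|lia]. assert (k (j - 1) < k j)%nat by (apply k_strict_mono; lia). lia. }
  subst; lia.
Qed.

Lemma Bmat_at_kj j0 (v : nat -> R) : (1 <= j0 <= m)%nat ->
  fsum m (fun j => Bmat k (k j0) j * v j) = v j0.
Proof.
  intros Hj0. rewrite (fsum_single m _ j0 Hj0).
  - unfold Bmat. rewrite Nat.eqb_refl. ring.
  - intros j Hj Hne. unfold Bmat. destruct (Nat.eqb_spec (k j0) (k j)); [|ring].
    exfalso. destruct (lt_eq_lt_dec j j0) as [[Hlt|]|Hlt]; auto.
    + assert (k j < k j0)%nat by (apply k_strict_mono; lia). lia.
    + assert (k j0 < k j)%nat by (apply k_strict_mono; lia). lia.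
Qed.

Lemma Bmat_not_InI i (v : nat -> R) : ~ InI m k i -> fsum m (fun j => Bmat k i j * v j) = 0.
Proof.
  intros HI. apply fsum_zero. intros j Hj. unfold Bmat.
  destruct (Nat.eqb_spec i (k j)); [|ring]. exfalso; apply HI; exists j; auto.
Qed.

Lemma A_not_InI A i (x : nat -> R) : CanonA n m k A -> (1 <= i < n)%nat -> ~ InI m k i ->
  fsum n (fun l => A i l * x l) = x (S i).
Proof.
  intros HA Hi HI. rewrite (fsum_single n _ (S i) ltac:(lia)).
  - rewrite (HA i ltac:(lia) HI (S i) ltac:(lia)), Nat.eqb_refl. ring.
  - intros l Hl Hne. rewrite (HA i ltac:(lia) HI l Hl).
    destruct (Nat.eqb_spec l (S i)); [lia | ring].
Qed.

Section Forward.
Variables (N : nat) (A : nat -> nat -> R) (z : nat -> R).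
Hypothesis HA : CanonA n m k A.

Lemma xz_dynamics t i : (1 <= i <= n)%nat ->
  xz n m N k z (S t) i = fsum n (fun l => A i l * xz n m N k z t l)
                         + fsum m (fun j => Bmat k i j * uz n m N k A z t j).
Proof.
  intros Hi. destruct (block_exists i Hi) as (j0 & Hj0 & Hb).
  destruct (Nat.eq_dec i (k j0)) as [->|Hne].
  - rewrite (Bmat_at_kj j0 _ Hj0), (xz_block N z (S t) (k j0) j0 Hi Hj0 Hb).
    destruct (Nat.ltb_spec0 (k j0) (S t + k j0)); [|lia].
    replace (S t + k j0 - k j0)%nat with (S t) by lia.
    unfold uz. destruct (Nat.leb_spec0 1 j0); destruct (Nat.leb_spec0 j0 m); try lia.
    simpl. ring.
  - assert (HnI : ~ InI m k i) by (apply (not_InI_inside_block i j0); lia).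
    assert (Hkj0 := k_range j0 Hj0).
    rewrite (Bmat_not_InI i _ HnI), (A_not_InI A i _ HA ltac:(lia) HnI).
    rewrite (xz_block N z (S t) i j0 Hi Hj0 Hb), (xz_block N z t (S i) j0 ltac:(lia) Hj0 ltac:(lia)).
    replace (t + S i)%nat with (S t + i)%nat by lia. ring.
Qed.

Lemma xz_feasible : Feasible n m N k A (xz n m N k z) (uz n m N k A z).
Proof.
  split; [|split; [|split]].
  - intros t _ i Hi. unfold xz. destruct Hi as [->|Hi]; simpl; auto.
    destruct (Nat.leb_spec0 i n); [lia|]. rewrite andb_false_r. auto.
  - intros t _ j Hj. unfold uz. destruct Hj as [->|Hj]; simpl; auto.
    destruct (Nat.leb_spec0 j m); [lia|]. rewrite andb_false_r. auto.
  - intros i. destruct (le_lt_dec 1 i); [destruct (le_lt_dec i n)|].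
    + destruct (block_exists i ltac:(lia)) as (j0 & Hj0 & Hb).
      rewrite (xz_block N z 0 i j0 ltac:(lia) Hj0 Hb).
      destruct (Nat.ltb_spec0 (k j0) (0 + i)); auto. lia.
    + unfold xz. destruct (Nat.leb_spec0 i n); [lia|]. rewrite andb_false_r. auto.
    + unfold xz. destruct (Nat.leb_spec0 1 i); [lia|]. auto.
  - intros t _ i Hi. apply xz_dynamics; auto.
Qed.

End Forward.

(* The inverse change of variables: z^j_t := x_t at the coordinate k_j. *)
Definition zstar (N : nat) (x : nat -> nat -> R) : nat -> R :=
  fun q => if andb (1 <=? q)%nat (q <=? m * N)%nat
           then x (S ((q - 1) / m)) (k (S ((q - 1) mod m))) else 0.

Lemma zstar_supp N x : supp (m * N) (zstar N x).
Proof.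
  intros i Hi. unfold zstar. destruct Hi as [->|Hi]; simpl; auto.
  destruct (Nat.leb_spec0 i (m * N)); [lia|]. rewrite andb_false_r; auto.
Qed.

Lemma zc_zstar N x t j : (1 <= t <= N)%nat -> (1 <= j <= m)%nat ->
  zc N m (zstar N x) t j = x t (k j).
Proof.
  intros Ht Hj. unfold zc, zstar.
  destruct (Nat.leb_spec0 1 t); destruct (Nat.leb_spec0 t N); try lia. cbn [andb].
  assert (H1 : (1 <= (t - 1) * m + j)%nat) by nia.
  assert (Hle : ((t - 1) * m + j <= m * N)%nat) by nia.
  rewrite (proj2 (Nat.leb_le 1 _) H1), (proj2 (Nat.leb_le _ (m * N)) Hle). cbn [andb].
  assert (Hq : (t - 1)%nat = (((t - 1) * m + j - 1) / m)%nat)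
    by (apply (Nat.div_unique _ _ _ (j - 1)); lia).
  assert (Hr : (j - 1)%nat = (((t - 1) * m + j - 1) mod m)%nat)
    by (apply (Nat.mod_unique _ _ (t - 1) _); lia).
  rewrite <- Hq, <- Hr. replace (S (t - 1)) with t by lia. replace (S (j - 1)) with j by lia.
  reflexivity.
Qed.

Section Backward.
Variables (N : nat) (A : nat -> nat -> R) (x u : nat -> nat -> R).
Hypothesis HA : CanonA n m k A.
Hypothesis Hf : Feasible n m N k A x u.

Lemma feasible_shift j0 dd i t : (1 <= j0 <= m)%nat -> (k (j0 - 1) < i)%nat ->
  (i + dd = k j0)%nat -> (t <= N)%nat ->
  x t i = if (k j0 <? t + i)%nat then x (t + i - k j0)%nat (k j0) else 0.
Proof.
  intros Hj0. destruct Hf as (_ & _ & Hx0 & Hdyn).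
  revert i t. induction dd as [|dd IH]; intros i t Hi Hid Ht.
  - replace (k j0) with i by lia. destruct t as [|t].
    + rewrite Hx0. destruct (Nat.ltb_spec0 i (0 + i)); [lia | auto].
    + destruct (Nat.ltb_spec0 i (S t + i)); [|lia]. f_equal. lia.
  - destruct t as [|t].
    + rewrite Hx0. destruct (Nat.ltb_spec0 (k j0) (0 + i)); [lia | auto].
    + assert (HnI : ~ InI m k i) by (apply (not_InI_inside_block i j0); lia).
      assert (Hkj0 := k_range j0 Hj0).
      rewrite (Hdyn t ltac:(lia) i ltac:(lia)), (Bmat_not_InI i _ HnI).
      rewrite (A_not_InI A i _ HA ltac:(lia) HnI), (IH (S i) t ltac:(lia) ltac:(lia) ltac:(lia)).
      replace (t + S i)%nat with (S t + i)%nat by lia. ring.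
Qed.

Lemma xz_zstar t : (t <= N)%nat -> xz n m N k (zstar N x) t = x t.
Proof.
  intros Ht. destruct Hf as (Hsx & _ & _ & _).
  extensionality i. destruct (le_lt_dec 1 i); [destruct (le_lt_dec i n)|].
  - destruct (block_exists i ltac:(lia)) as (j0 & Hj0 & Hb).
    rewrite (xz_block N _ t i j0 ltac:(lia) Hj0 Hb).
    rewrite (feasible_shift j0 (k j0 - i) i t Hj0 ltac:(lia) ltac:(lia) Ht).
    destruct (Nat.ltb_spec0 (k j0) (t + i)); auto.
    apply zc_zstar; lia.
  - unfold xz. destruct (Nat.leb_spec0 i n); [lia|]. rewrite andb_false_r.
    rewrite (Hsx t Ht i); auto; lia.
  - unfold xz. destruct (Nat.leb_spec0 1 i); [lia|]. simpl.
    rewrite (Hsx t Ht i); auto; lia.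
Qed.

Lemma uz_zstar t : (t < N)%nat -> uz n m N k A (zstar N x) t = u t.
Proof.
  intros Ht. assert (Hf' := Hf). destruct Hf' as (_ & Hsu & _ & Hdyn).
  extensionality j. unfold uz.
  destruct (le_lt_dec 1 j); [destruct (le_lt_dec j m)|].
  - destruct (Nat.leb_spec0 1 j); destruct (Nat.leb_spec0 j m); try lia. simpl.
    rewrite xz_zstar, zc_zstar by lia.
    rewrite (Hdyn t Ht (k j) (k_range j ltac:(lia))), (Bmat_at_kj j _ ltac:(lia)). ring.
  - destruct (Nat.leb_spec0 j m); [lia|]. rewrite andb_false_r.
    rewrite (Hsu t Ht j); auto; lia.
  - destruct (Nat.leb_spec0 1 j); [lia|]. simpl. rewrite (Hsu t Ht j); auto; lia.
Qed.

Lemma J_zstar f g :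
  Jcost N f g (xz n m N k (zstar N x)) (uz n m N k A (zstar N x)) = Jcost N f g x u.
Proof.
  unfold Jcost. rewrite xz_zstar by lia. f_equal. apply sum_lt_ext. intros t Ht.
  rewrite xz_zstar, uz_zstar by lia. reflexivity.
Qed.

End Backward.
End CanonicalForm.

Lemma J_eq_C n m N k A f g z :
  Jcost N f g (xz n m N k z) (uz n m N k A z) = Ccost n m N k A f g z.
Proof. unfold Jcost, Ccost. simpl. rewrite sum_lt_add. ring. Qed.

(* Since z <-> (x, u) is onto the feasible set, min C = J^* and it is attained. *)
Lemma C_attains_Jstar n m N k A f g Jstar : CanonIdx n m k -> CanonA n m k A ->
  IsOptVal n m N k A f g Jstar ->
  exists zs, supp (m * N) zs /\ Ccost n m N k A f g zs = Jstar /\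
             forall z, Ccost n m N k A f g zs <= Ccost n m N k A f g z.
Proof.
  intros Hk HA [(xo & uo & Hfo & HJo) Hopt].
  assert (HCzs : Ccost n m N k A f g (zstar m k N xo) = Jstar)
    by (rewrite <- J_eq_C, (J_zstar n m k Hk N A xo uo HA Hfo); auto).
  exists (zstar m k N xo). split; [apply zstar_supp | split; auto].
  intros z. rewrite HCzs, <- J_eq_C. apply Hopt, xz_feasible; auto.
Qed.

Theorem theorem1
  (n m N W : nat) (k : nat -> nat) (A : nat -> nat -> R)
  (f g : nat -> (nat -> R) -> R) (mu_f l_f l_g : R)
  (mu_c l_c : R) (gradC : (nat -> R) -> nat -> R)
  (phi : Oracle) (Jstar : R)
  (Hk : CanonIdx n m k)
  (HA : CanonA n m k A)
  (Hmuf : 0 < mu_f)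
  (Hf : forall t, (t <= N)%nat -> StronglyConvex n mu_f (f t) /\ Smooth n l_f (f t))
  (Hg : forall t, (t < N)%nat -> StronglyConvex m 0 (g t) /\ Smooth m l_g (g t))
  (HW : (1 <= W)%nat)
  (Hmuc : 0 < mu_c) (Hlc : 0 < l_c)
  (HCconv : StronglyConvex (m * N) mu_c (Ccost n m N k A f g))
  (HCsmooth : SmoothWith (m * N) l_c (Ccost n m N k A f g) gradC)
  (Hphi : IsInitOracle m N phi)
  (HJ : IsOptVal n m N k A f g Jstar) :
  let K := ((W - 1) / pmax k m)%nat in
  let zeta := l_c / mu_c in
  let z0 := phi f g in
  let gam_g := 1 / l_c in
  let ph := 1 - 1 / sqrt zeta in
  let gam_c := (1 + ph) / l_c in
  let gam_w := ph ^ 2 / (2 - ph) in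
  let gam_y := ph ^ 2 / ((1 + ph) * (2 - ph)) in
  let gam_z := ph ^ 2 / (1 - ph ^ 2) in
  RegretZ n m N k A f g Jstar (gd_iter gradC gam_g z0 K)
    <= zeta * ((zeta - 1) / zeta) ^ K * RegretZ n m N k A f g Jstar z0
  /\
  RegretZ n m N k A f g Jstar (tm_iter gradC gam_c gam_w gam_y gam_z z0 K)
    <= zeta ^ 2 * ((sqrt zeta - 1) / sqrt zeta) ^ (2 * K)
       * RegretZ n m N k A f g Jstar z0.
Proof.
  intros K zeta z0 gam_g ph gam_c gam_w gam_y gam_z.
  destruct (C_attains_Jstar n m N k A f g Jstar Hk HA HJ) as (zs & Hzs & HFzs & Hmin).
  set (F := Ccost n m N k A f g) in *.
  assert (Hreg : forall z, RegretZ n m N k A f g Jstar z = F z - F zs)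
    by (intro z; unfold RegretZ; rewrite J_eq_C, <- HFzs; reflexivity).
  rewrite !Hreg.
  assert (Hz0 : supp (m * N) z0) by apply (proj1 Hphi).
  assert (HG : forall x, supp (m * N) x -> supp (m * N) (gradC x))
    by (intros x Hx; apply (proj1 HCsmooth x Hx)).
  destruct (Nat.eq_dec (m * N) 0) as [Hd0|Hd].
  - (* in dimension 0 every iterate is the minimizer *)
    assert (Hgap0 : forall z, supp (m * N) z -> F z - F zs = 0).
    { intros z Hz. rewrite Hd0 in Hz, Hzs. rewrite (supp_dim0 z Hz), (supp_dim0 zs Hzs). ring. }
    rewrite (Hgap0 _ (gd_iter_supp _ _ _ _ HG Hz0 K)), (Hgap0 z0 Hz0),
      (Hgap0 _ (tm_iter_supp _ _ _ _ _ _ _ HG Hz0 K)).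
    split; right; ring.
  - assert (HmuL := strong_convexity_le_smoothness (m * N) F gradC mu_c l_c
                      ltac:(lia) HCconv HCsmooth ltac:(lra)).
    assert (Hzeta : 1 <= zeta).
    { unfold zeta. apply Rmult_le_reg_r with mu_c; auto.
      unfold Rdiv; rewrite Rmult_assoc, Rinv_l; lra. }
    assert (Hgap0 : 0 <= F z0 - F zs) by (pose proof (Hmin z0); lra).
    set (s := sqrt zeta).
    assert (Hs1 : 1 <= s) by (unfold s; rewrite <- sqrt_1; apply sqrt_le_1_alt; lra).
    assert (Hs2 : s ^ 2 = zeta) by (unfold s; rewrite <- Rsqr_pow2; apply Rsqr_sqrt; lra).
    split.
    + assert (H := gd_rate (m * N) F gradC mu_c l_c z0 zs HCconv HCsmooth
                     ltac:(lra) Hz0 Hzs K).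
      replace (1 - mu_c / l_c) with ((zeta - 1) / zeta) in H by (unfold zeta; field; lra).
      set (bound := ((zeta - 1) / zeta) ^ K * (F z0 - F zs)) in *.
      assert (0 <= bound) by (apply Rmult_le_pos; [apply pow_le, div_nonneg|]; lra).
      fold gam_g in H. rewrite Rmult_assoc. fold bound. nra.
    + assert (H := tm_rate mu_c l_c s ph gam_c gam_w gam_y gam_z Hmuc Hs1
                     ltac:(rewrite Hs2; unfold zeta; field; lra) eq_refl eq_refl eq_refl eq_refl
                     eq_refl (m * N) F gradC z0 zs HCconv HCsmooth Hz0 Hzs (fun z _ => Hmin z) K).
      replace ((s - 1) / s) with ph by (unfold ph; fold s; field; lra).
      replace (zeta ^ 2) with (s ^ 4) by (rewrite <- Hs2; ring).
      exact H.
Qed.
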